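(* Let $G=K_n$ with $n\ge2$, and let $L$ be a list-assignment with $|L(v)|\ge\deg(v)+1=n$ for all $v\in V(G)$. If $\left|\bigcup_{v\in V(G)}L(v)\right|=n$, then all lists are identical and every $L$-colouring of $G$ is frozen. Otherwise, $\alpha\sim\beta$ for all $L$-colourings $\alpha,\beta$, and in fact $\mathrm{dist}_{\mathcal{C}(G,L)}(\alpha,\beta)\le 3n/2+2$.
   Context: An $L$-colouring is a proper colouring $\varphi$ with $\varphi(v)\in L(v)$ for all $v$. A vertex $v$ is frozen under $\varphi$ if every colour of $L(v)\setminus\{\varphi(v)\}$ appears on a neighbour of $v$; a colouring is frozen if all its vertices are frozen. $\mathcal{C}(G,L)$ is the graph whose vertices are the $L$-colourings, adjacent when they differ by a single-vertex recolouring (keeping the colouring a proper $L$-colouring); $\alpha\sim\beta$ means $\alpha$ and $\beta$ lie in the same component of $\mathcal{C}(G,L)$, and $\mathrm{dist}_{\mathcal{C}(G,L)}$ is the graph distance. *)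

From mathcomp Require Import all_boot.
Set Implicit Arguments. Unset Strict Implicit. Unset Printing Implicit Defensive.

(* A simple graph on a finType T is given by an adjacency relation [adj]
   (intended symmetric and irreflexive). *)

Definition complete_adj (n : nat) : rel 'I_n := fun u v => u != v.

Section Colourings.
Variables (T C : finType) (adj : rel T) (L : T -> {set C}).

Definition is_Lcolouring (phi : {ffun T -> C}) : Prop :=
  (forall v, phi v \in L v) /\ (forall u v, adj u v -> phi u != phi v).

Definition frozen_vertex (phi : {ffun T -> C}) (v : T) : Prop :=
  forall c, c \in L v :\ phi v -> exists2 u, adj v u & phi u = c.

Definition frozen (phi : {ffun T -> C}) : Prop := forall v, frozen_vertex phi v.

Definition recol_step (a b : {ffun T -> C}) : Prop :=
  [/\ is_Lcolouring a, is_Lcolouring b, a != b &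
      exists v, forall u, u != v -> a u = b u].

Fixpoint recol_walk (k : nat) (a b : {ffun T -> C}) : Prop :=
  match k with
  | 0 => a = b
  | k'.+1 => exists c, recol_step a c /\ recol_walk k' c b
  end.

Definition recol_equiv (a b : {ffun T -> C}) : Prop := exists k, recol_walk k a b.

Definition recol_dist_le (a b : {ffun T -> C}) (d : nat) : Prop :=
  exists2 k, k <= d & recol_walk k a b.

End Colourings.

(* On K_n a proper L-colouring is injective, so it uses exactly n colours.  To walk
   from g to b, count every vertex coloured differently from b twice, and once more if
   its target colour is still used by g.  A vertex whose target colour is free is
   recoloured at once: one step, potential down by 2.  Otherwise move a mismatched
   vertex v to a colour c of L v unused by g and then the vertex p with b p = g v to
   b p: two steps, potential down by 4, since p is settled and neither p nor the vertex
   waiting for g p is blocked any more.  If no such c exists, g and b have the same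
   palette and it is the list of every mismatched vertex; as the lists together have
   more than n colours, some settled vertex w can be parked outside that palette.  Then
   b w is the spare colour c of every later two-step move, and w is moved back last.
   Parking and unparking cost two steps, whence 2 dist <= potential + 4 <= 3n + 4. *)

From mathcomp Require Import all_boot zify.
Set Implicit Arguments. Unset Strict Implicit. Unset Printing Implicit Defensive.

Section Walks.
Variables (T C : finType) (adj : rel T) (L : T -> {set C}).
Local Notation col := {ffun T -> C}.
Local Notation step := (recol_step adj L).
Local Notation walk := (recol_walk adj L).

Lemma recol_walk_cat k1 k2 a b c : walk k1 a b -> walk k2 b c -> walk (k1 + k2) a c.
Proof.
elim: k1 a => [|k IH] a /=; first by move=> ->.
by case=> d [ad db] bc; exists d; split; last exact: IH.
Qed.

Lemma recol_step_walk a b : step a b -> walk 1 a b.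
Proof. by move=> ab; exists b. Qed.

Lemma recol_walk_proper k a b : walk k.+1 a b -> is_Lcolouring adj L b.
Proof.
elim: k a => [|k IH] a [c [ac cb]]; last exact: IH cb.
by rewrite -cb; case: ac.
Qed.

Lemma recol_walk_descent (P : col -> Prop) (pot : col -> nat) (e : nat) (b : col) :
  (forall g, P g -> (exists2 k, 2 * k <= pot g + e & walk k g b) \/
     exists g' k, [/\ P g', walk k.+1 g g' & 2 * k.+1 + pot g' <= pot g]) ->
  forall g, P g -> exists2 k, 2 * k <= pot g + e & walk k g b.
Proof.
move=> progress g; have [m] := ubnP (pot g); elim: m g => // m IH g lt_m Pg.
case: (progress g Pg) => [//|[g' [k [Pg' gg' le_pot]]]].
have [k' le_k' g'b] : exists2 k', 2 * k' <= pot g' + e & walk k' g' b.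
  by apply: IH => //; lia.
by exists (k.+1 + k'); [lia | exact: recol_walk_cat gg' g'b].
Qed.

End Walks.

Section CompleteGraph.
Variables (T C : finType) (L : T -> {set C}).
Local Notation col := {ffun T -> C}.
Local Notation proper := (is_Lcolouring (fun u v : T => u != v) L).
Local Notation step := (recol_step (fun u v : T => u != v) L).
Local Notation walk := (recol_walk (fun u v : T => u != v) L).

Definition recolour (g : col) (v : T) (c : C) : col :=
  [ffun x => if x == v then c else g x].

Lemma recolourE g v c x : recolour g v c x = if x == v then c else g x.
Proof. by rewrite ffunE. Qed.

Lemma recolour_cases g v c x : recolour g v c x = g x \/ recolour g v c x = c.
Proof. by rewrite recolourE; case: ifP; [right | left]. Qed.

Lemma proper_inj g : proper g -> injective g.
Proof. by case=> _ gP u v; apply: contra_eq; apply: gP. Qed.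

Lemma card_codom_proper g : proper g -> #|codom g| = #|T|.
Proof. by move/proper_inj/card_codom. Qed.

Lemma bigcup_tight :
  (forall v, #|T| <= #|L v|) -> #|\bigcup_v L v| = #|T| -> forall v, L v = \bigcup_u L u.
Proof. by move=> HL HU v; apply/eqP; rewrite eqEcard bigcup_sup // HU HL. Qed.

Lemma tight_frozen (phi : col) :
  (forall v, #|T| <= #|L v|) -> #|\bigcup_v L v| = #|T| ->
  proper phi -> frozen (fun u v : T => u != v) L phi.
Proof.
move=> HL HU phiP v c; rewrite !inE => /andP[cv cL].
have E : codom phi =i L v.
  apply/subset_cardP; first by rewrite card_codom_proper // bigcup_tight // HU.
  apply/subsetP => _ /codomP[u ->]; rewrite (bigcup_tight HL HU v) -(bigcup_tight HL HU u).
  by case: phiP.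
have /codomP[u cu] : c \in codom phi by rewrite E.
by exists u => //; apply: contraNneq cv => vu; rewrite cu vu.
Qed.

Lemma recolour_step g v c :
  proper g -> c \in L v -> c \notin codom g -> step g (recolour g v c).
Proof.
move=> [gL gP] cL cg.
have gc u : g u != c by apply: contraNneq cg => <-; apply: codom_f.
split=> //; first split=> [x|x y xy]; rewrite ?recolourE.
- by case: eqP => [->|].
- have [xv|xv] := eqVneq x v; have [yv|yv] := eqVneq y v.
  + by move: xy; rewrite xv yv eqxx.
  + by rewrite eq_sym gc.
  + by rewrite gc.
  + exact: gP.
- by apply/eqP => /ffunP/(_ v); rewrite recolourE eqxx; apply/eqP.
- by exists v => u /negbTE uv; rewrite recolourE uv.
Qed.

Lemma recolour_swap_walk g v c p d :
  proper g -> c \in L v -> c \notin codom g -> d \in L p -> d = g v -> p != v ->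
  walk 2 g (recolour (recolour g v c) p d).
Proof.
move=> gP cL cg dL dv pv; have gg1 := recolour_step gP cL cg.
exists (recolour g v c); split=> //; apply/recol_step_walk/recolour_step => //.
  by case: gg1.
apply/codomP => -[u]; rewrite recolourE dv.
case: (eqVneq u v) => [_ cv|uv /(proper_inj gP) vu]; last by rewrite vu eqxx in uv.
by rewrite -cv codom_f in cg.
Qed.

Section Target.
Variable b : col.
Hypothesis bP : proper b.

(* The parked vertex is kept out of the count ([W = [set w]]): lending its target
   colour to another vertex blocks it without moving it away from [b]. *)
Definition mismatch (W : {set T}) (g : col) : {set T} :=
  [set x | x \notin W & g x != b x].

Definition blocked (W : {set T}) (g : col) : {set T} :=
  [set x in mismatch W g | b x \in codom g].

Definition potential (W : {set T}) (g : col) : nat :=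
  2 * #|mismatch W g| + #|blocked W g|.

Lemma potential_le W g : potential W g <= 3 * #|T|.
Proof.
by rewrite /potential; have := max_card (mismatch W g); have := max_card (blocked W g); lia.
Qed.

Lemma recolour_unblocked W g y :
  proper g -> y \in mismatch W g -> b y \notin codom g ->
  [/\ step g (recolour g y (b y)),
      mismatch W (recolour g y (b y)) \subset mismatch W g &
      (potential W (recolour g y (b y))).+2 <= potential W g].
Proof.
move=> gP y_mis byg; set g' := recolour g y (b y).
have gg' : step g g' by apply: recolour_step => //; case: bP.
have misE : mismatch W g' = mismatch W g :\ y.
  apply/setP => z; rewrite !inE recolourE.
  by case: (eqVneq z y) => [->|]; rewrite ?eqxx ?andbF.
have blk : blocked W g' \subset blocked W g.
  apply/subsetP => z; rewrite !inE recolourE.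
  case: (eqVneq z y) => [->|zy]; first by rewrite eqxx andbF.
  case/andP=> /andP[zW gz] /codomP[u]; rewrite recolourE.
  case: (eqVneq u y) => [_ /(proper_inj bP) zyE|_ bz]; first by rewrite zyE eqxx in zy.
  by rewrite zW gz bz codom_f.
split=> //; first by rewrite misE subsetDl.
rewrite /potential misE (cardsD1 y (mismatch W g)) y_mis.
by have := subset_leq_card blk; lia.
Qed.

Lemma recolour_pair (W : {set T}) g v c p q :
  proper g -> g v != b v -> c \in L v -> c \notin codom g ->
  (forall z, z \notin W -> b z != c) ->
  b p = g v -> b q = g p -> p \notin W -> q \notin W ->
  [/\ walk 2 g (recolour (recolour g v c) p (b p)),
      mismatch W (recolour (recolour g v c) p (b p)) \subset mismatch W g &
      potential W (recolour (recolour g v c) p (b p)) + 4 <= potential W g].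
Proof.
move=> gP gv cL cg bWc bp bq pW qW; set g' := recolour _ p (b p).
have pv : p != v by apply: contraNneq gv => pv; rewrite -bp pv.
have gp : g p != b p by rewrite bp (inj_eq (proper_inj gP)).
have pq : p != q by apply: contraNneq gp => pq; rewrite {2}pq bq.
have gq : g q != b q by rewrite bq (inj_eq (proper_inj gP)) eq_sym.
have g'E x : g' x = if x == p then b p else if x == v then c else g x.
  by rewrite !recolourE.
have mis : mismatch W g' \subset mismatch W g :\ p.
  apply/subsetP => z; rewrite !inE g'E.
  case: (eqVneq z p) => [->|_]; first by rewrite eqxx andbF.
  by case: (eqVneq z v) => [->|_] /andP[-> gz]; rewrite ?gv ?gz.
have blk : blocked W g' \subset blocked W g :\ p :\ q.
  apply/subsetP => z; rewrite inE => /andP[z_mis /codomP[u]].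
  move/subsetP/(_ z z_mis): mis; rewrite !inE => /and3P[zp zW gz].
  rewrite g'E; case: (eqVneq u p) => [_ /(proper_inj bP) zpE|up].
    by rewrite zpE eqxx in zp.
  case: (eqVneq u v) => [_ bz|_ bz]; first by move: (bWc z zW); rewrite bz eqxx.
  rewrite zp zW gz bz codom_f !andbT /=.
  by apply: contraNneq up => zq; apply/eqP/(proper_inj gP); rewrite -bz zq bq.
split.
- by apply: recolour_swap_walk => //; case: bP.
- by apply: subset_trans mis (subsetDl _ _).
have p_mis : p \in mismatch W g by rewrite inE pW gp.
have p_blk : p \in blocked W g by rewrite inE p_mis bp codom_f.
have q_blk : q \in blocked W g :\ p by rewrite !inE eq_sym pq qW gq bq codom_f.
have lt_mis : #|mismatch W g'| < #|mismatch W g|.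
  by rewrite (cardsD1 p (mismatch W g)) p_mis ltnS subset_leq_card.
have lt_blk : #|blocked W g'| < (#|blocked W g|).-1.
  rewrite (cardsD1 p (blocked W g)) p_blk (cardsD1 q (blocked W g :\ p)) q_blk.
  by rewrite ltnS subset_leq_card.
by rewrite /potential; move: lt_mis lt_blk; clear; lia.
Qed.

Lemma codom_eq_of_blocked W g :
  proper g -> (forall x, x \in mismatch W g -> b x \in codom g) ->
  (forall x, x \in W -> b x \in codom g) -> codom b =i codom g.
Proof.
move=> gP blk bW; apply/subset_cardP; first by rewrite !card_codom_proper.
apply/subsetP => _ /codomP[x ->]; case: (boolP (x \in W)) => [/bW //|xW].
case: (eqVneq (g x) (b x)) => [<-|gx]; first exact: codom_f.
by apply: blk; rewrite inE xW gx.
Qed.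

(* While [w] is parked outside the palette of [b], the colour [b w] is spare. *)
Definition parked (w : T) (g : col) : Prop :=
  [/\ proper g, g w \notin codom b, forall x, x != w -> g x \in codom b &
      forall x, x \in mismatch [set w] g -> {subset codom b <= L x}].

Lemma parkedW w g g' :
  parked w g -> proper g' -> g' w = g w ->
  (forall x, g' x = g x \/ g' x \in codom b) ->
  mismatch [set w] g' \subset mismatch [set w] g -> parked w g'.
Proof.
move=> [_ gw gb gL] g'P g'w g'g mis; split=> // [|x xw|x /(subsetP mis)/gL //].
- by rewrite g'w.
- by case: (g'g x) => [->|//]; apply: gb.
Qed.

Lemma parked_done w g : parked w g -> mismatch [set w] g = set0 -> walk 1 g b.
Proof.
move=> [gP gw gb _] mis0.
have agree x : x != w -> g x = b x.
  by move=> xw; have := in_set0 x; rewrite -mis0 !inE xw => /negbFE/eqP.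
have bw : b w \notin codom g.
  apply/codomP => -[u]; case: (eqVneq u w) => [-> bwE|uw]; first by rewrite -bwE codom_f in gw.
  by rewrite agree // => /(proper_inj bP) wu; rewrite wu eqxx in uw.
suff <- : recolour g w (b w) = b by apply/recol_step_walk/recolour_step => //; case: bP.
by apply/ffunP => x; rewrite recolourE; case: (eqVneq x w) => [->|/agree ->].
Qed.

Lemma parked_progress w g :
  parked w g -> mismatch [set w] g != set0 ->
  exists g' k, [/\ parked w g', walk k.+1 g g' &
                   2 * k.+1 + potential [set w] g' <= potential [set w] g].
Proof.
move=> wg; have [gP gw gb gL] := wg.
case: (pickP [pred y | (y \in mismatch [set w] g) && (b y \notin codom g)]).
  move=> y /andP[y_mis byg] _; have [gg' mis pot] := recolour_unblocked gP y_mis byg.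
  have yw : y != w by move: y_mis; rewrite !inE => /andP[].
  exists (recolour g y (b y)), 0; split; [|exact: recol_step_walk|by move: pot; clear; lia].
  apply: parkedW mis => //; first by case: gg'.
    by rewrite recolourE eq_sym (negbTE yw).
  by move=> x; case: (recolour_cases g y (b y) x) => ->; [left | right; apply: codom_f].
move=> all_blocked mis_ne.
have {}all_blocked x : x \in mismatch [set w] g -> b x \in codom g.
  by move=> x_mis; move: (all_blocked x); rewrite /= x_mis => /negbFE.
have bw : b w \notin codom g.
  apply: contra gw => bwg; rewrite (codom_eq_of_blocked gP all_blocked) ?codom_f //.
  by move=> x; rewrite in_set1 => /eqP->.
case/set0Pn: mis_ne => x x_mis; have := x_mis; rewrite !inE => /andP[xw gx].
have [p bp] : exists p, g x = b p by apply/codomP/gb.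
have pW : p \notin [set w].
  by rewrite in_set1; apply: contraNneq bw => <-; rewrite -bp codom_f.
have [q bq] : exists q, g p = b q by apply/codomP/gb; rewrite -in_set1.
have qW : q \notin [set w].
  by rewrite in_set1; apply: contraNneq bw => <-; rewrite -bq codom_f.
have bx : b w \in L x by apply: gL x_mis _ (codom_f b w).
have bWc z : z \notin [set w] -> b z != b w by rewrite in_set1 (inj_eq (proper_inj bP)).
have [gg' mis pot] := recolour_pair gP gx bx bw bWc (esym bp) (esym bq) pW qW.
exists (recolour (recolour g x (b w)) p (b p)), 1.
split; [|exact: gg'|by move: pot; clear; lia].
apply: parkedW mis => //; first exact: recol_walk_proper gg'.
  by move: pW; rewrite in_set1 !recolourE eq_sym => /negbTE->; rewrite eq_sym (negbTE xw).
move=> z; case: (recolour_cases (recolour g x (b w)) p (b p) z) => ->.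
  by case: (recolour_cases g x (b w) z) => ->; [left | right; apply: codom_f].
by right; apply: codom_f.
Qed.

Lemma parked_walk w g :
  parked w g -> exists2 k, 2 * k <= potential [set w] g + 2 & walk k g b.
Proof.
apply: (recol_walk_descent (P := parked w)) => g' wg'.
have [mis0|mis_ne] := eqVneq (mismatch [set w] g') set0.
  by left; exists 1; [exact: leq_addl | exact: parked_done wg' mis0].
by right; apply: parked_progress.
Qed.

Section ManyColours.
Hypothesis list_size : forall v, #|T| <= #|L v|.
Hypothesis many_colours : #|T| < #|\bigcup_v L v|.

Lemma park_detour g :
  proper g -> (forall x, x \in mismatch set0 g -> b x \in codom g) ->
  (forall x c, x \in mismatch set0 g -> c \in L x -> c \in codom g) ->
  exists2 k, 2 * k <= potential set0 g + 4 & walk k g b.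
Proof.
move=> gP all_blocked no_free.
have E : codom b =i codom g.
  by apply: codom_eq_of_blocked all_blocked _ => // x; rewrite inE.
have /subsetPn[c cU cg] : ~~ (\bigcup_v L v \subset codom g).
  by apply/negP => /subset_leq_card; rewrite card_codom_proper // leqNgt many_colours.
case/bigcupP: cU => w _ cLw.
have gw : g w = b w.
  by apply/eqP; apply: contraNT cg => gw; apply: no_free cLw; rewrite !inE gw.
have gg1 := recolour_step gP cLw cg.
have L_eq x : x \in mismatch set0 g -> {subset codom b <= L x}.
  move=> x_mis; have sub : L x \subset codom g by apply/subsetP => c' /(no_free x c' x_mis).
  have LE : L x =i codom g.
    apply/subset_cardP => //; apply/eqP.
    by rewrite eqn_leq subset_leq_card // card_codom_proper // list_size.
  by move=> c'; rewrite E -LE.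
have mis : mismatch [set w] (recolour g w c) \subset mismatch set0 g.
  by apply/subsetP => x; rewrite !inE recolourE => /andP[xw]; rewrite (negbTE xw).
have wg1 : parked w (recolour g w c).
  split; first by case: gg1.
  - by rewrite recolourE eqxx E.
  - by move=> x xw; rewrite recolourE (negbTE xw) E codom_f.
  - by move=> x /(subsetP mis)/L_eq.
have blk : blocked [set w] (recolour g w c) \subset blocked set0 g.
  apply/subsetP => x; rewrite inE => /andP[/(subsetP mis) x_mis _].
  by rewrite inE x_mis all_blocked.
have [k le_k g1b] := parked_walk wg1.
exists k.+1; last exact: recol_walk_cat 1 k _ _ _ (recol_step_walk gg1) g1b.
move: le_k (subset_leq_card mis) (subset_leq_card blk); rewrite /potential; clear; lia.
Qed.

Lemma mismatch_progress g :
  proper g -> mismatch set0 g != set0 ->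
  (exists2 k, 2 * k <= potential set0 g + 4 & walk k g b) \/
  exists g' k, [/\ proper g', walk k.+1 g g' &
                   2 * k.+1 + potential set0 g' <= potential set0 g].
Proof.
move=> gP _.
case: (pickP [pred y | (y \in mismatch set0 g) && (b y \notin codom g)]).
  move=> y /andP[y_mis byg]; have [gg' _ pot] := recolour_unblocked gP y_mis byg.
  right; exists (recolour g y (b y)), 0.
  by split; [case: gg' | exact: recol_step_walk | move: pot; clear; lia].
move=> all_blocked.
have {}all_blocked x : x \in mismatch set0 g -> b x \in codom g.
  by move=> x_mis; move: (all_blocked x); rewrite /= x_mis => /negbFE.
pose free vc := [&& vc.1 \in mismatch set0 g, vc.2 \in L vc.1 & vc.2 \notin codom g].
case: (pickP free) => [[v c] /and3P[] /= v_mis cL cg | no_free]; last first.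
  left; apply: park_detour => // x c x_mis cL; apply: contraFT (no_free (x, c)) => cg.
  by rewrite /free x_mis cL.
have E : codom b =i codom g.
  by apply: codom_eq_of_blocked all_blocked _ => // x; rewrite inE.
have gv : g v != b v by move: v_mis; rewrite !inE.
have [p bp] : exists p, g v = b p by apply/codomP; rewrite E codom_f.
have [q bq] : exists q, g p = b q by apply/codomP; rewrite E codom_f.
have bc z : z \notin set0 -> b z != c.
  by move=> _; apply: contraNneq cg => <-; rewrite -E codom_f.
have [gg' _ pot] :=
  recolour_pair gP gv cL cg bc (esym bp) (esym bq) (negbT (in_set0 p)) (negbT (in_set0 q)).
right; exists (recolour (recolour g v c) p (b p)), 1.
by split; [exact: recol_walk_proper gg' | exact: gg' | move: pot; clear; lia].
Qed.

Lemma proper_walk g : proper g -> exists2 k, 2 * k <= potential set0 g + 4 & walk k g b.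
Proof.
apply: (recol_walk_descent (P := proper)) => g' g'P.
have [mis0|] := eqVneq (mismatch set0 g') set0; last exact: mismatch_progress.
left; exists 0 => //; apply/ffunP => x; apply/eqP.
by have := in_set0 x; rewrite -mis0 !inE => /negbFE.
Qed.

End ManyColours.
End Target.
End CompleteGraph.

Unset Implicit Arguments.

Theorem mainTheorem17 (C : finType) (n : nat) (L : 'I_n -> {set C}) :
  2 <= n ->
  (forall v : 'I_n, n <= #|L v|) ->
  (#|\bigcup_(v : 'I_n) L v| = n ->
     (forall u v : 'I_n, L u = L v) /\
     (forall phi : {ffun 'I_n -> C},
        is_Lcolouring (@complete_adj n) L phi -> frozen (@complete_adj n) L phi)) /\
  (#|\bigcup_(v : 'I_n) L v| <> n ->
     forall alpha beta : {ffun 'I_n -> C},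
       is_Lcolouring (@complete_adj n) L alpha ->
       is_Lcolouring (@complete_adj n) L beta ->
       recol_equiv (@complete_adj n) L alpha beta /\
       (* dist <= 3n/2 + 2, i.e. 2*dist <= 3n + 4 *)
       exists2 d, 2 * d <= 3 * n + 4 & recol_dist_le (@complete_adj n) L alpha beta d).
Proof.
move=> n2 HL; have list_size v : #|'I_n| <= #|L v| by rewrite card_ord.
split=> [HU | HU alpha beta aP bP].
  have tight : #|\bigcup_v L v| = #|'I_n| by rewrite card_ord.
  split; first by move=> u v; rewrite !(bigcup_tight list_size tight).
  by move=> phi; apply: tight_frozen.
have many_colours : #|'I_n| < #|\bigcup_v L v|.
  pose v0 : 'I_n := Ordinal n2.
  rewrite card_ord ltn_neqAle (leq_trans (HL v0) (subset_leq_card (bigcup_sup v0 isT))) andbT.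
  by apply/eqP => /esym.
have [k le_k ab] := proper_walk bP list_size many_colours aP.
split; first by exists k.
exists k; last by exists k.
by move: le_k (potential_le beta set0 alpha); rewrite card_ord; clear; lia.
Qed.
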